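(* Let $H^2(\beta)$ be a weighted Hardy space on $\mathbb{D}$ with weights $\beta=(\beta_n)_{n\ge0}$, and let $\varphi$ be a holomorphic self-map of $\mathbb{D}$ such that $C_\varphi:H^2(\beta)\to H^2(\beta)$ is bounded. Then $C_\varphi^*$ is a composition operator (i.e. $C_\varphi^*=C_\psi$ for some map $\psi:\mathbb{D}\to\mathbb{D}$) if and only if $\varphi(z)=\delta z$ for some $\delta\in\mathbb{C}$ with $|\delta|\le1$.
   Context: $\mathbb{D}$ is the open unit disc. Let $(\beta_n)_{n\ge0}$ be a sequence with $\beta_0=1$, $\beta_n>0$ for all $n$, and $\liminf_n\beta_n^{1/n}\ge1$. The weighted Hardy space $H^2(\beta)$ consists of holomorphic $f(z)=\sum_{n\ge0}a_nz^n$ on $\mathbb{D}$ with $\|f\|^2=\sum_{n\ge0}|a_n|^2\beta_n^2<\infty$, with inner product $\langle f,g\rangle=\sum_n a_n\overline{b_n}\beta_n^2$ for $g=\sum b_nz^n$. It is a reproducing kernel Hilbert space with kernel $\kappa_w(z)=\sum_{n\ge0}\frac{\overline{w}^nz^n}{\beta_n^2}$. $C_\varphi f=f\circ\varphi$ and $C_\varphi^*$ is its Hilbert space adjoint. *)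

From Stdlib Require Import Reals.
From Coquelicot Require Import Coquelicot.
Open Scope R_scope.

Definition weight (beta : nat -> R) : Prop :=
  beta 0%nat = 1 /\ (forall n, 0 < beta n) /\
  Rbar_le 1 (LimInf_seq (fun n => Rpower (beta n) (/ INR n))).

Definition inD (z : C) : Prop := Cmod z < 1.

Definition holo_on_D (f : C -> C) : Prop :=
  forall z : C, inD z -> ex_derive (K:=C_AbsRing) (V:=C_NormedModule) f z.

Definition ps_rep (a : nat -> C) (f : C -> C) : Prop :=
  forall z : C, inD z ->
    is_series (K:=C_AbsRing) (V:=C_NormedModule) (fun n => (a n * pow_n z n)%C) (f z).

Definition H2 (beta : nat -> R) (a : nat -> C) : Prop :=
  ex_series (fun n => (Cmod (a n))^2 * (beta n)^2).

Definition H2norm (beta : nat -> R) (a : nat -> C) : R :=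
  sqrt (Series (fun n => (Cmod (a n))^2 * (beta n)^2)).

Definition H2ip (beta : nat -> R) (a b : nat -> C) : C :=
  (Series (fun n => Re (a n * Cconj (b n)) * (beta n)^2),
   Series (fun n => Im (a n * Cconj (b n)) * (beta n)^2)).

Definition Cphi_bounded (beta : nat -> R) (phi : C -> C) : Prop :=
  exists M : R, forall (a : nat -> C) (f : C -> C), H2 beta a -> ps_rep a f ->
    exists b : nat -> C, H2 beta b /\ ps_rep b (fun z => f (phi z)) /\
      H2norm beta b <= M * H2norm beta a.

(* C_phi^* = C_psi: C_psi maps H^2(beta) into itself and
   <C_phi f, g> = <f, C_psi g> for all f, g in H^2(beta). *)
Definition adjoint_is_composition (beta : nat -> R) (phi psi : C -> C) : Prop :=
  forall (b : nat -> C) (g : C -> C), H2 beta b -> ps_rep b g ->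
    exists c : nat -> C, H2 beta c /\ ps_rep c (fun z => g (psi z)) /\
      forall (a d : nat -> C) (f : C -> C),
        H2 beta a -> ps_rep a f -> H2 beta d -> ps_rep d (fun z => f (phi z)) ->
        H2ip beta d b = H2ip beta a c.

(* If C_phi^* = C_psi, pair the adjoint identity with the monomials.  Against
   the constant 1 it gives psi(0) = 0; against z^k (with z on the other side)
   it says that the k-th Taylor coefficient of phi is, up to the weights, the
   conjugate of the first Taylor coefficient of psi^k.  Since psi vanishes at 0,
   psi^k vanishes to order >= 2 for k >= 2, and psi^0 is constant, so every
   coefficient of phi but the first is 0: phi(z) = delta z, and |delta| <= 1
   because phi maps D into D.  Conversely, for phi(z) = delta z the operator
   C_phi is diagonal, z^n |-> delta^n z^n, so its adjoint z^n |-> conj(delta)^n z^n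
   is composition with z |-> conj(delta) z. *)
From Stdlib Require Import Reals Lra Lia ClassicalEpsilon.
From Coquelicot Require Import Coquelicot.
Open Scope R_scope.

Local Notation is_Cseries := (is_series (K:=C_AbsRing) (V:=C_NormedModule)).

Lemma pow_n_Cpow (z : C) n : pow_n (K:=C_Ring) z n = (z ^ n)%C.
Proof. reflexivity. Qed.

Lemma Cmult_RtoC_eq0 (x : C) r : 0 < r -> (x * RtoC r)%C = 0%C -> x = 0%C.
Proof.
  intros Hr Hx. apply Cmod_eq_0.
  apply (f_equal Cmod) in Hx. rewrite Cmod_mult, Cmod_R, Rabs_right, Cmod_0 in Hx by lra.
  nra.
Qed.

Lemma Cconj_eq0 (x : C) : Cconj x = 0%C -> x = 0%C.
Proof. intros Hx. apply Cmod_eq_0. now rewrite <- Cmod_conj, Hx, Cmod_0. Qed.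

Lemma pow_le_sqr x m : 0 <= x <= 1 -> x ^ S (S m) <= x ^ 2.
Proof.
  intros Hx. replace (x ^ S (S m)) with (x ^ 2 * x ^ m) by (simpl; ring).
  assert (x ^ m <= 1) by (rewrite <- (pow1 m); apply pow_incr; lra).
  pose proof (pow_le x 2 (proj1 Hx)). nra.
Qed.

Lemma le_mult_small_eq0 x D : 0 <= x -> (forall t, 0 < t <= /4 -> x <= D * t) -> x = 0.
Proof.
  intros Hx H. destruct (Rle_lt_or_eq_dec 0 x Hx) as [Hpos|]; [exfalso|auto].
  pose proof (Rabs_pos D).
  set (t := Rmin (/4) (x / (2 * (Rabs D + 1)))).
  assert (Ht : 0 < t <= /4).
  { split; [apply Rmin_glb_lt; [lra|apply Rdiv_lt_0_compat; lra] | apply Rmin_l]. }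
  assert (Htx : t <= x / (2 * (Rabs D + 1))) by apply Rmin_r.
  assert (D * t <= Rabs D * t) by (apply Rmult_le_compat_r; [lra|apply Rle_abs]).
  assert (Rabs D * t <= Rabs D * (x / (2 * (Rabs D + 1)))) by (apply Rmult_le_compat_l; lra).
  assert (Rabs D * (x / (2 * (Rabs D + 1))) < x).
  { apply Rmult_lt_reg_r with (2 * (Rabs D + 1)); [lra|]. field_simplify; nra. }
  specialize (H t Ht). lra.
Qed.

Lemma inD_RtoC t : 0 <= t < 1 -> inD (RtoC t).
Proof. intros Ht. unfold inD. rewrite Cmod_R, Rabs_right; lra. Qed.

Lemma inD_scale (delta z : C) : Cmod delta <= 1 -> inD z -> inD (delta * z)%C.
Proof.
  unfold inD. intros Hd Hz. rewrite Cmod_mult.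
  pose proof (Cmod_ge_0 delta). pose proof (Cmod_ge_0 z). nra.
Qed.

Lemma Cmod_le_1_of_scale_self_map (delta : C) :
  (forall z, inD z -> inD (delta * z)%C) -> Cmod delta <= 1.
Proof.
  intros H. destruct (Rle_or_lt (Cmod delta) 1) as [|Hgt]; [assumption|exfalso].
  assert (Ht : 0 < / Cmod delta < 1).
  { split; [apply Rinv_0_lt_compat; lra|]. rewrite <- Rinv_1. apply Rinv_lt_contravar; lra. }
  specialize (H _ (inD_RtoC (/ Cmod delta) ltac:(lra))). unfold inD in H.
  rewrite Cmod_mult, Cmod_R, Rabs_right, Rinv_r in H by lra. lra.
Qed.

Lemma sum_n_supported_at {G : AbelianMonoid} k (u : nat -> G) :
  (forall n, n <> k -> u n = zero) ->
  forall N, sum_n u N = if Nat.leb k N then u k else zero.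
Proof.
  intros Hu N. induction N as [|N IH].
  - rewrite sum_O. destruct k; [reflexivity|]. apply Hu. lia.
  - rewrite sum_Sn, IH. destruct (Nat.eq_dec k (S N)) as [->|Hk].
    + rewrite Nat.leb_refl.
      replace (Nat.leb (S N) N) with false by (symmetry; apply Nat.leb_gt; lia).
      apply plus_zero_l.
    + rewrite (Hu (S N)) by congruence. rewrite plus_zero_r.
      destruct (Nat.leb_spec k N), (Nat.leb_spec k (S N)); try reflexivity; lia.
Qed.

Lemma is_series_supported_at {K : AbsRing} {V : NormedModule K} k (u : nat -> V) :
  (forall n, n <> k -> u n = zero) -> is_series u (u k).
Proof.
  intros Hu. apply filterlim_ext_loc with (f := fun _ => u k); [|apply filterlim_const].
  exists k. intros N HN. rewrite (sum_n_supported_at k u Hu N).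
  replace (Nat.leb k N) with true by (symmetry; apply Nat.leb_le; lia). reflexivity.
Qed.

Lemma is_Cseries_supported_at k (u : nat -> C) :
  (forall n, n <> k -> u n = 0%C) -> is_Cseries u (u k).
Proof. exact (is_series_supported_at k u). Qed.

Lemma Series_supported_at k (u : nat -> R) : (forall n, n <> k -> u n = 0) -> Series u = u k.
Proof. intros Hu. apply is_series_unique, (is_series_supported_at (V:=R_NormedModule)), Hu. Qed.

Lemma is_Cseries_unique (u : nat -> C) l1 l2 : is_Cseries u l1 -> is_Cseries u l2 -> l1 = l2.
Proof. exact (filterlim_locally_unique (K:=C_AbsRing) (V:=C_NormedModule) (sum_n u) l1 l2). Qed.

Lemma Cmod_sum_n_le (u : nat -> C) (v : nat -> R) N :
  (forall n, Cmod (u n) <= v n) -> Cmod (sum_n (G:=C_AbelianMonoid) u N) <= sum_n v N.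
Proof.
  intros H. induction N as [|N IH].
  - rewrite !sum_O. apply H.
  - rewrite !sum_Sn. eapply Rle_trans; [apply Cmod_triangle|]. apply Rplus_le_compat; auto.
Qed.

Lemma is_Cseries_Cmod_le (u : nat -> C) (v : nat -> R) l L :
  is_Cseries u l -> is_series v L -> (forall n, Cmod (u n) <= v n) -> Cmod l <= L.
Proof.
  intros Hu Hv H.
  assert (Hlim : is_lim_seq (fun n => Cmod (sum_n (G:=C_AbelianMonoid) u n)) (Cmod l)).
  { change (filterlim (fun n => @norm C_AbsRing C_NormedModule (sum_n u n)) eventually
      (locally (@norm C_AbsRing C_NormedModule l))).
    eapply filterlim_comp; [apply Hu|apply (filterlim_norm (K:=C_AbsRing) (V:=C_NormedModule))]. }
  exact (is_lim_seq_le _ _ _ _ (fun n => Cmod_sum_n_le u v n H) Hlim (Hv : is_lim_seq (sum_n v) L)).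
Qed.

Lemma is_Cseries_terms_bounded (u : nat -> C) l :
  is_Cseries u l -> exists M, forall n, Cmod (u n) <= M.
Proof.
  intros H. destruct (filterlim_bounded (K:=C_AbsRing) (V:=C_NormedModule) (sum_n u)) as [M HM].
  { exists l. exact H. }
  assert (HM' : forall n, Cmod (sum_n (G:=C_AbelianMonoid) u n) <= M) by exact HM.
  exists (2 * M). intros [|n].
  - specialize (HM' 0%nat). rewrite sum_O in HM'. pose proof (Cmod_ge_0 (u 0%nat)). lra.
  - assert (u (S n) = (sum_n u (S n) - sum_n u n)%C) as ->.
    { rewrite sum_Sn. change (u (S n) = (sum_n u n + u (S n)) - sum_n u n)%C. ring. }
    eapply Rle_trans; [apply Cmod_triangle|]. rewrite Cmod_opp.
    pose proof (HM' (S n)). pose proof (HM' n). lra.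
Qed.

Lemma ps_rep_ext a f g : ps_rep a f -> (forall z, inD z -> f z = g z) -> ps_rep a g.
Proof. intros H E z Hz. rewrite <- E by exact Hz. apply H, Hz. Qed.

Lemma ps_rep_at_0 a f : ps_rep a f -> f 0%C = a 0%nat.
Proof.
  intros H. eapply is_Cseries_unique; [apply H, inD_RtoC; lra|].
  replace (a 0%nat) with (a 0%nat * pow_n (K:=C_Ring) (RtoC 0) 0%nat)%C
    by (rewrite pow_n_Cpow; simpl; ring).
  apply (is_Cseries_supported_at 0 (fun n => a n * pow_n (K:=C_Ring) (RtoC 0) n)%C).
  intros [|n] Hn; [lia|]. rewrite pow_n_Cpow. simpl. ring.
Qed.

Lemma ps_rep_tail a f z : ps_rep a f -> inD z ->
  is_Cseries (fun n => a (S n) * pow_n (K:=C_Ring) z (S n))%C (f z - a 0%nat)%C.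
Proof.
  intros H Hz.
  apply (is_series_incr_1 (K:=C_AbsRing) (V:=C_NormedModule)
           (fun n => a n * pow_n (K:=C_Ring) z n)%C).
  match goal with |- is_series _ ?l => replace l with (f z) end; [exact (H z Hz)|].
  simpl. change (f z = (f z - a 0%nat) + a 0%nat * 1)%C. ring.
Qed.

(* The coefficients are bounded on the circle of radius 1/2, so on |z| <= 1/4
   the tail is dominated by a geometric series of ratio 2|z| <= 1/2. *)
Lemma ps_rep_lipschitz_at_0 a f : ps_rep a f ->
  exists K, 0 <= K /\ forall z, Cmod z <= /4 -> Cmod (f z - a 0%nat)%C <= K * Cmod z.
Proof.
  intros H.
  destruct (is_Cseries_terms_bounded _ _ (H _ (inD_RtoC (/2) ltac:(lra)))) as [M HM].
  assert (Hcoef : forall n, Cmod (a n) * (/2) ^ n <= M).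
  { intros n. specialize (HM n). cbv beta in HM.
    now rewrite Cmod_mult, pow_n_Cpow, Cmod_pow, Cmod_R, Rabs_right in HM by lra. }
  assert (HM0 : 0 <= M).
  { specialize (Hcoef 0%nat). pose proof (Cmod_ge_0 (a 0%nat)). simpl in Hcoef. lra. }
  exists (4 * M). split; [lra|]. intros z Hz.
  set (q := 2 * Cmod z).
  assert (Hq : 0 <= q <= /2) by (pose proof (Cmod_ge_0 z); unfold q; lra).
  assert (Hgeom : is_series (fun n => M * q * q ^ n) (M * q * / (1 - q))).
  { exact (is_series_scal (K:=R_AbsRing) (V:=R_NormedModule) (M * q) _ _
             (is_series_geom q ltac:(rewrite Rabs_right; lra))). }
  assert (Hz1 : inD z) by (unfold inD; lra).
  eapply Rle_trans; [apply (is_Cseries_Cmod_le _ _ _ _ (ps_rep_tail a f z H Hz1) Hgeom)|].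
  - intros n. rewrite Cmod_mult, pow_n_Cpow, Cmod_pow.
    replace (Cmod z) with (/2 * q) by (unfold q; field).
    rewrite Rpow_mult_distr, <- Rmult_assoc.
    replace (M * q * q ^ n) with (M * q ^ S n) by (simpl; ring).
    apply Rmult_le_compat_r; [apply pow_le; lra|apply Hcoef].
  - apply Rle_trans with (M * q * 2).
    + apply Rmult_le_compat_l; [nra|]. rewrite <- Rinv_inv. apply Rinv_le_contravar; lra.
    + unfold q. lra.
Qed.

Lemma ps_rep_shift a f : ps_rep a f ->
  exists g, ps_rep (fun n => a (S n)) g /\
    forall z, inD z -> z <> 0%C -> f z = (a 0%nat + z * g z)%C.
Proof.
  intros H.
  exists (fun z : C => if excluded_middle_informative (z = 0%C) then a 1%nat
                       else ((f z - a 0%nat) / z)%C).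
  split.
  - intros z Hz. destruct (excluded_middle_informative (z = 0%C)) as [->|Hz0].
    + replace (a 1%nat) with (a 1%nat * pow_n (K:=C_Ring) (RtoC 0) 0%nat)%C
        by (rewrite pow_n_Cpow; simpl; ring).
      apply (is_Cseries_supported_at 0 (fun n => a (S n) * pow_n (K:=C_Ring) (RtoC 0) n)%C).
      intros [|n] Hn; [lia|]. rewrite pow_n_Cpow. simpl. ring.
    + replace ((f z - a 0%nat) / z)%C
        with (scal (K:=C_AbsRing) (V:=C_NormedModule) (/ z) (f z - a 0%nat))%C
        by (change (/ z * (f z - a 0%nat) = (f z - a 0%nat) / z)%C; field; exact Hz0).
      eapply is_series_ext; [|exact (is_series_scal (/ z)%C _ _ (ps_rep_tail a f z H Hz))].
      intros n. change (/ z * (a (S n) * (z * z ^ n)) = a (S n) * z ^ n)%C.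
      field. exact Hz0.
  - intros z Hz Hz0. destruct (excluded_middle_informative (z = 0%C)); [contradiction|].
    field. exact Hz0.
Qed.

(* Writing f z = a_0 + z g(z) with g Lipschitz at 0 and g(0) = a_1, the
   quadratic bound forces |a_1| <= |a_1 - g t| + |g t| = O(t). *)
Lemma ps_rep_coef1_eq0 a f :
  ps_rep a f ->
  (exists K, forall z, inD z -> Cmod z <= /4 -> Cmod (f z - f 0%C)%C <= K * Cmod z ^ 2) ->
  a 1%nat = 0%C.
Proof.
  intros H [K HK].
  destruct (ps_rep_shift a f H) as [g [Hg Hfg]].
  destruct (ps_rep_lipschitz_at_0 _ _ Hg) as [Kg [_ HKg]].
  apply Cmod_eq_0, (le_mult_small_eq0 _ (Kg + K)); [apply Cmod_ge_0|]. intros t Ht.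
  assert (Hz : inD (RtoC t)) by (apply inD_RtoC; lra).
  assert (Ht0 : RtoC t <> 0%C) by (intros E; injection E; lra).
  assert (Hmt : Cmod (RtoC t) = t) by (rewrite Cmod_R, Rabs_right; lra).
  specialize (HKg (RtoC t) ltac:(lra)). specialize (HK (RtoC t) Hz ltac:(lra)).
  rewrite (Hfg _ Hz Ht0), (ps_rep_at_0 _ _ H) in HK.
  replace (a 0%nat + RtoC t * g (RtoC t) - a 0%nat)%C with (RtoC t * g (RtoC t))%C in HK by ring.
  rewrite Cmod_mult, Hmt in HK. rewrite Hmt in HKg.
  assert (Hgt : Cmod (g (RtoC t)) <= K * t) by (apply Rmult_le_reg_l with t; nra).
  replace (a 1%nat) with ((a 1%nat - g (RtoC t)) + g (RtoC t))%C by ring.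
  eapply Rle_trans; [apply Cmod_triangle|].
  rewrite <- Cmod_opp. replace (- (a 1%nat - g (RtoC t)))%C with (g (RtoC t) - a 1%nat)%C by ring.
  lra.
Qed.

Lemma ps_rep_zero_coef k e : ps_rep e (fun _ => 0%C) -> e k = 0%C.
Proof.
  revert e. induction k as [|k IH]; intros e H.
  - symmetry. exact (ps_rep_at_0 _ _ H).
  - destruct (ps_rep_shift e _ H) as [g [Hg Hfg]].
    apply (IH (fun n => e (S n))). apply (ps_rep_ext _ _ _ Hg). intros z Hz.
    destruct (excluded_middle_informative (z = 0%C)) as [->|Hz0].
    + rewrite (ps_rep_at_0 _ _ Hg). apply (ps_rep_coef1_eq0 e _ H).
      exists 0. intros z' _ _. unfold Cminus. rewrite Cplus_opp_r, Cmod_0. lra.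
    + specialize (Hfg z Hz Hz0). rewrite <- (ps_rep_at_0 _ _ H) in Hfg.
      apply Cmod_eq_0. apply (f_equal Cmod) in Hfg.
      replace (0 + z * g z)%C with (z * g z)%C in Hfg by ring.
      rewrite Cmod_0, Cmod_mult in Hfg.
      assert (0 < Cmod z) by (apply Cmod_gt_0; auto). pose proof (Cmod_ge_0 (g z)). nra.
Qed.

Lemma ps_rep_coef_unique a b f : ps_rep a f -> ps_rep b f -> forall n, a n = b n.
Proof.
  intros Ha Hb n.
  assert (H : ps_rep (fun n => a n - b n)%C (fun _ => 0%C)).
  { intros z Hz.
    replace (RtoC 0) with (plus (f z) (opp (f z))) by (change (f z - f z = RtoC 0)%C; ring).
    eapply is_series_ext; [|exact (is_series_minus _ _ _ _ (Ha z Hz) (Hb z Hz))].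
    intros m. change (a m * z ^ m - b m * z ^ m = (a m - b m) * z ^ m)%C. ring. }
  pose proof (ps_rep_zero_coef n _ H) as E.
  replace (a n) with ((a n - b n) + b n)%C by ring. rewrite E. ring.
Qed.

Lemma ps_rep_scale a f (delta : C) : Cmod delta <= 1 -> ps_rep a f ->
  ps_rep (fun n => a n * pow_n (K:=C_Ring) delta n)%C (fun z => f (delta * z)%C).
Proof.
  intros Hd H z Hz.
  eapply is_series_ext; [|exact (H _ (inD_scale _ _ Hd Hz))].
  intros n. change (a n * (delta * z) ^ n = a n * delta ^ n * z ^ n)%C.
  rewrite Cpow_mult_l. ring.
Qed.

Lemma ps_rep_linear d f : ps_rep d f -> (forall k, k <> 1%nat -> d k = 0%C) ->
  forall z, inD z -> f z = (d 1%nat * z)%C.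
Proof.
  intros H Hd z Hz. eapply is_Cseries_unique; [exact (H z Hz)|].
  replace (d 1%nat * z)%C with (d 1%nat * pow_n (K:=C_Ring) z 1%nat)%C
    by (rewrite pow_n_Cpow; simpl; ring).
  apply (is_Cseries_supported_at 1 (fun n => d n * pow_n (K:=C_Ring) z n)%C).
  intros n Hn. rewrite (Hd n Hn). ring.
Qed.

Definition basis (k : nat) : nat -> C := fun n => if Nat.eqb n k then 1%C else 0%C.

Lemma basis_eq k : basis k k = 1%C.
Proof. unfold basis. now rewrite Nat.eqb_refl. Qed.

Lemma basis_neq k n : n <> k -> basis k n = 0%C.
Proof. intros Hn. unfold basis. now rewrite (proj2 (Nat.eqb_neq n k) Hn). Qed.

Lemma ps_rep_monomial k : ps_rep (basis k) (fun z => pow_n (K:=C_Ring) z k).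
Proof.
  intros z Hz.
  replace (pow_n (K:=C_Ring) z k) with (basis k k * pow_n (K:=C_Ring) z k)%C
    by (rewrite basis_eq; ring).
  apply (is_Cseries_supported_at k (fun n => basis k n * pow_n (K:=C_Ring) z n)%C).
  intros n Hn. rewrite basis_neq by exact Hn. ring.
Qed.

Lemma ps_rep_id : ps_rep (basis 1) (fun z => z).
Proof. apply (ps_rep_ext _ _ _ (ps_rep_monomial 1)). intros z _. change (z * 1 = z)%C. ring. Qed.

Lemma H2_basis beta k : H2 beta (basis k).
Proof.
  exists (beta k ^ 2).
  replace (beta k ^ 2) with (Cmod (basis k k) ^ 2 * beta k ^ 2) by (rewrite basis_eq, Cmod_1; ring).
  apply (is_series_supported_at (V:=R_NormedModule) k (fun n => Cmod (basis k n) ^ 2 * beta n ^ 2)).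
  intros n Hn. rewrite basis_neq, Cmod_0 by exact Hn. change (0 ^ 2 * beta n ^ 2 = 0). ring.
Qed.

Lemma H2_scale beta a (delta : C) : Cmod delta <= 1 -> H2 beta a ->
  H2 beta (fun n => a n * pow_n (K:=C_Ring) delta n)%C.
Proof.
  intros Hd Ha. apply (ex_series_le (K:=R_AbsRing) (V:=R_CompleteNormedModule)) with (2 := Ha).
  intros n. change (Rabs (Cmod (a n * pow_n (K:=C_Ring) delta n)%C ^ 2 * beta n ^ 2)
                     <= Cmod (a n) ^ 2 * beta n ^ 2).
  rewrite Cmod_mult, pow_n_Cpow, Cmod_pow.
  assert (Hpow : 0 <= Cmod delta ^ n <= 1).
  { split; [apply pow_le, Cmod_ge_0|].
    rewrite <- (pow1 n). apply pow_incr. pose proof (Cmod_ge_0 delta). lra. }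
  pose proof (Cmod_ge_0 (a n)). pose proof (pow2_ge_0 (beta n)).
  rewrite Rabs_right by (apply Rle_ge; apply Rmult_le_pos; [apply pow2_ge_0|lra]).
  apply Rmult_le_compat_r; [lra|]. rewrite Rpow_mult_distr.
  rewrite <- (Rmult_1_r (Cmod (a n) ^ 2)) at 2. apply Rmult_le_compat_l; [apply pow2_ge_0|].
  rewrite <- (pow1 2). apply pow_incr. lra.
Qed.

Lemma H2ip_basis_r beta x k : H2ip beta x (basis k) = (x k * RtoC (beta k ^ 2))%C.
Proof.
  unfold H2ip. rewrite !(Series_supported_at k).
  - rewrite basis_eq. destruct (x k) as [u v]. unfold Cmult, Cconj, RtoC. simpl. f_equal; ring.
  - intros n Hn. rewrite basis_neq by exact Hn. destruct (x n) as [u v]. simpl. ring.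
  - intros n Hn. rewrite basis_neq by exact Hn. destruct (x n) as [u v]. simpl. ring.
Qed.

Lemma H2ip_basis_l beta y k : H2ip beta (basis k) y = (Cconj (y k) * RtoC (beta k ^ 2))%C.
Proof.
  unfold H2ip. rewrite !(Series_supported_at k).
  - rewrite basis_eq. destruct (y k) as [u v]. unfold Cmult, Cconj, RtoC. simpl. f_equal; ring.
  - intros n Hn. rewrite basis_neq by exact Hn. destruct (y n) as [u v]. simpl. ring.
  - intros n Hn. rewrite basis_neq by exact Hn. destruct (y n) as [u v]. simpl. ring.
Qed.

(* psi^0 is constant, and for k >= 2 the Lipschitz bound |psi z| <= K |z| gives
   |psi z|^k <= K^k |z|^2 near 0. *)
Lemma ps_rep_pow_coef1_eq0 c psi ck k :
  ps_rep c psi -> c 0%nat = 0%C -> ps_rep ck (fun z => pow_n (K:=C_Ring) (psi z) k) ->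
  k <> 1%nat -> ck 1%nat = 0%C.
Proof.
  intros Hc Hc0 Hck Hk. apply (ps_rep_coef1_eq0 _ _ Hck).
  assert (Hpsi0 : psi (RtoC 0) = RtoC 0) by (rewrite (ps_rep_at_0 _ _ Hc); exact Hc0).
  destruct (ps_rep_lipschitz_at_0 _ _ Hc) as [K [HK Hpsi]].
  rewrite Hc0 in Hpsi.
  destruct k as [|[|m]]; [|lia|].
  - exists 0. intros z _ _. change (Cmod (1 - 1)%C <= 0 * Cmod z ^ 2).
    unfold Cminus. rewrite Cplus_opp_r, Cmod_0. lra.
  - exists (K ^ S (S m)). intros z _ Hz.
    specialize (Hpsi z Hz). unfold Cminus in Hpsi. rewrite Copp_0, Cplus_0_r in Hpsi.
    rewrite Hpsi0.
    change (Cmod (psi z ^ S (S m) - RtoC 0 ^ S (S m))%C <= K ^ S (S m) * Cmod z ^ 2).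
    replace (psi z ^ S (S m) - RtoC 0 ^ S (S m))%C with (psi z ^ S (S m))%C by (simpl; ring).
    rewrite Cmod_pow. pose proof (Cmod_ge_0 z). pose proof (Cmod_ge_0 (psi z)).
    apply Rle_trans with ((K * Cmod z) ^ S (S m)); [apply pow_incr; lra|].
    rewrite Rpow_mult_distr. apply Rmult_le_compat_l; [apply pow_le, HK|].
    apply pow_le_sqr. lra.
Qed.

Lemma adjoint_composition_fixes_0 beta phi psi :
  (forall n, 0 < beta n) -> adjoint_is_composition beta phi psi ->
  exists c, ps_rep c psi /\ c 0%nat = 0%C.
Proof.
  intros Hb Hadj.
  destruct (Hadj (basis 1) (fun z => z) (H2_basis beta 1) ps_rep_id) as [c [_ [Hc Hip]]].
  exists c. split; [exact Hc|].
  specialize (Hip (basis 0) (basis 0) (fun _ => 1%C) (H2_basis beta 0) (ps_rep_monomial 0)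
                  (H2_basis beta 0) (ps_rep_monomial 0)).
  rewrite H2ip_basis_r, H2ip_basis_l, basis_neq in Hip by lia.
  apply Cconj_eq0, (Cmult_RtoC_eq0 _ (beta 0%nat ^ 2)); [apply pow_lt, Hb|].
  rewrite <- Hip. ring.
Qed.

(* Pairing C_phi z with z^k: the k-th coefficient of phi is, up to the weights,
   the conjugate of the first coefficient of psi^k. *)
Lemma adjoint_composition_coef_eq0 beta phi psi d :
  (forall n, 0 < beta n) -> adjoint_is_composition beta phi psi ->
  H2 beta d -> ps_rep d phi -> forall k, k <> 1%nat -> d k = 0%C.
Proof.
  intros Hb Hadj Hd Hdphi k Hk.
  destruct (adjoint_composition_fixes_0 beta phi psi Hb Hadj) as [c [Hc Hc0]].
  destruct (Hadj (basis k) _ (H2_basis beta k) (ps_rep_monomial k)) as [ck [_ [Hck Hip]]].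
  specialize (Hip (basis 1) d (fun z => z) (H2_basis beta 1) ps_rep_id Hd Hdphi).
  rewrite H2ip_basis_r, H2ip_basis_l, (ps_rep_pow_coef1_eq0 c psi ck k Hc Hc0 Hck Hk) in Hip.
  apply (Cmult_RtoC_eq0 _ (beta k ^ 2)); [apply pow_lt, Hb|].
  rewrite Hip. apply injective_projections; simpl; ring.
Qed.

(* Boundedness of C_phi is only used to expand C_phi z = phi in H^2(beta). *)
Lemma adjoint_composition_is_scale beta phi psi :
  (forall n, 0 < beta n) -> (forall z, inD z -> inD (phi z)) -> Cphi_bounded beta phi ->
  adjoint_is_composition beta phi psi ->
  exists delta, Cmod delta <= 1 /\ forall z, inD z -> phi z = (delta * z)%C.
Proof.
  intros Hb Hphi [M HM] Hadj.
  destruct (HM (basis 1) (fun z => z) (H2_basis beta 1) ps_rep_id) as [d [Hd [Hdphi _]]].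
  pose proof (adjoint_composition_coef_eq0 beta phi psi d Hb Hadj Hd Hdphi) as Hcoef.
  pose proof (ps_rep_linear d phi Hdphi Hcoef) as Hlin.
  exists (d 1%nat). split; [|exact Hlin].
  apply Cmod_le_1_of_scale_self_map. intros z Hz. rewrite <- Hlin by exact Hz. auto.
Qed.

Lemma scale_adjoint_is_composition beta phi (delta : C) :
  Cmod delta <= 1 -> (forall z, inD z -> phi z = (delta * z)%C) ->
  adjoint_is_composition beta phi (fun z => Cconj delta * z)%C.
Proof.
  intros Hd Hphi b g Hb Hg.
  assert (Hd' : Cmod (Cconj delta) <= 1) by now rewrite Cmod_conj.
  exists (fun n => b n * pow_n (K:=C_Ring) (Cconj delta) n)%C.
  split; [exact (H2_scale beta b _ Hd' Hb)|]. split; [exact (ps_rep_scale b g _ Hd' Hg)|].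
  intros a d f _ Ha _ Hdf.
  assert (Haphi : ps_rep (fun n => a n * pow_n (K:=C_Ring) delta n)%C (fun z => f (phi z))).
  { apply (ps_rep_ext _ _ _ (ps_rep_scale a f delta Hd Ha)). intros z Hz. now rewrite Hphi. }
  pose proof (ps_rep_coef_unique _ _ _ Hdf Haphi) as Ed.
  assert (Hterm : forall n,
    (d n * Cconj (b n))%C = (a n * Cconj (b n * pow_n (K:=C_Ring) (Cconj delta) n))%C).
  { intros n. rewrite Ed, Cmult_conj, !pow_n_Cpow, Cpow_conj, Cconj_conj. ring. }
  unfold H2ip. f_equal; apply Series_ext; intros n; now rewrite Hterm.
Qed.

Theorem theorem3p3 (beta : nat -> R) (phi : C -> C) :
  weight beta ->
  holo_on_D phi ->
  (forall z, inD z -> inD (phi z)) ->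
  Cphi_bounded beta phi ->
  ((exists psi : C -> C, (forall z, inD z -> inD (psi z)) /\
                         adjoint_is_composition beta phi psi)
   <->
   (exists delta : C, Cmod delta <= 1 /\ forall z, inD z -> phi z = (delta * z)%C)).
Proof.
  intros [_ [Hbeta _]] _ Hphi Hbounded. split.
  - intros [psi [_ Hadj]].
    exact (adjoint_composition_is_scale beta phi psi Hbeta Hphi Hbounded Hadj).
  - intros [delta [Hd Hscale]]. exists (fun z => Cconj delta * z)%C. split.
    + intros z. apply inD_scale. now rewrite Cmod_conj.
    + exact (scale_adjoint_is_composition beta phi delta Hd Hscale).
Qed.
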